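(* Let $\Gamma\subset(\mathbb{RP}^1)^m$ be a realisable real EPBQ-curve, and let $a_{jl},b_{jl},e_{jl}$ be the coefficients of its defining relations. Then for any $j\ne l$, $$(1-a_{jl}e_{jl}-b_{jl}b_{lj})^2-4a_{jl}b_{jl}b_{lj}e_{jl}>0.$$
   Context: A real EPBQ-curve is an irreducible real algebraic curve $\Gamma\subset(\mathbb{RP}^1)^m$ (coordinates $z_1,\dots,z_m$) such that (i) for each $j\ne l$, $a_{jl}z_j^2z_l^2+b_{jl}z_j^2-2z_jz_l+b_{lj}z_l^2+e_{jl}=0$ on $\Gamma$ with real coefficients; (ii) no $z_j$ is identically $0$ or $\infty$ on $\Gamma$; (iii) for $j\ne l$, $z_j,z_l$ are neither directly nor inversely proportional on $\Gamma$. The coefficients are uniquely determined, with $a_{jl}=a_{lj}$, $e_{jl}=e_{lj}$. $\Gamma$ is realisable if there exist $n\ge3$, a decomposition $[n]=I_1\sqcup\dots\sqcup I_m$ into nonempty sets ($p\in I_{j(p)}$), nonzero reals $\lambda_1,\dots,\lambda_n$ with $\lambda_p\ne\pm\lambda_q$ whenever $p\ne q$, $j(p)=j(q)$, and reals $g_{pq}=g_{qp}$ for $p\ne q$, $j(p)=j(q)$, such that the matrices $G=(g_{pq})$, $H=(h_{pq})$ defined by $g_{pp}=h_{pp}=1$; $h_{pq}=\frac{2\lambda_p(\lambda_pg_{pq}-\lambda_q)}{\lambda_p^2-\lambda_q^2}$ if $p\ne q$, $j(p)=j(q)$; and, if $j(p)\ne j(q)$, $g_{pq}=\frac12\left(-\frac{a_{j(p)j(q)}}{\lambda_p\lambda_q}+\frac{\lambda_qb_{j(p)j(q)}}{\lambda_p}+\frac{\lambda_pb_{j(q)j(p)}}{\lambda_q}-\lambda_p\lambda_qe_{j(p)j(q)}\right)$,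 $h_{pq}=\frac{\lambda_pb_{j(q)j(p)}}{\lambda_q}-\lambda_p\lambda_qe_{j(p)j(q)}$, satisfy one of: (S) $G$ positive definite; (E) $G$ degenerate positive semidefinite with all principal minors of sizes $2,\dots,n-1$ strictly positive and no row of $H$ a linear combination of rows of $G$; (L) $G$ non-degenerate with negative index of inertia $1$, all principal minors of sizes $2,\dots,n-1$ strictly positive, and $\sum_{q,r}g^{qr}h_{pq}h_{pr}<0$ for all $p$, where $(g^{qr})=G^{-1}$. *)

From HB Require Import structures.
From mathcomp Require Import all_boot all_order all_algebra.
From mathcomp Require Import reals.
From mathcomp Require Import mpoly.

Set Implicit Arguments.
Unset Strict Implicit.
Unset Printing Implicit Defensive.

Import Order.TTheory GRing.Theory Num.Theory.
Local Open Scope ring_scope.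

Section EPBQ.
Variable R : realType.

(* A point of RP^1 is [Some x] (= x = [x:1]) or [None] (= infinity = [1:0]). *)
Definition RP1 := option R.

Definition hX (o : RP1) : R := if o is Some x then x else 1.
Definition hY (o : RP1) : R := if o is Some _ then 1 else 0.

Definition pt (m : nat) := {ffun 'I_m -> RP1}.

Definition ptset (m : nat) := pt m -> Prop.

Definition coords (m : nat) (P : pt m) : 'I_(m + m) -> R :=
  fun i => match split i with inl j => hX (P j) | inr j => hY (P j) end.

(* a polynomial in X_1..X_m (indices lshift) and Y_1..Y_m (indices rshift)
   which is multihomogeneous: homogeneous of some degree d_j in (X_j, Y_j)
   for every j; its vanishing at a point of (RP^1)^m is well defined *)
Definition multihomogeneous (m : nat) (p : {mpoly R[m + m]}) : Prop :=
  exists d : 'I_m -> nat, forall mo, mo \in msupp p ->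
    forall j : 'I_m, (mo (lshift m j) + mo (rshift m j))%N = d j.

Definition algebraic (m : nat) (A : ptset m) : Prop :=
  exists ps : seq {mpoly R[m + m]},
    (forall p, p \in ps -> multihomogeneous p) /\
    (forall P, A P <-> (forall p, p \in ps -> p.@[coords P] = 0)).

Definition subset_of (m : nat) (A B : ptset m) : Prop := forall P, A P -> B P.

Definition proper_in (m : nat) (A B : ptset m) : Prop :=
  subset_of A B /\ exists P, B P /\ ~ A P.

Definition finite_set (m : nat) (A : ptset m) : Prop :=
  exists s : seq (pt m), forall P, A P -> P \in s.

Definition irreducible_alg (m : nat) (G : ptset m) : Prop :=
  [/\ algebraic G, exists P, G P &
     ~ (exists A B : ptset m, [/\ algebraic A, algebraic B, proper_in A G,
          proper_in B G & forall P, G P -> A P \/ B P])].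

(* irreducible real algebraic curve: an irreducible real algebraic set of
   dimension 1, i.e. infinite and all of whose proper algebraic subsets
   (which have smaller dimension) are finite (dimension 0) *)
Definition irreducible_real_curve (m : nat) (G : ptset m) : Prop :=
  [/\ irreducible_alg G, ~ finite_set G &
     forall A : ptset m, algebraic A -> proper_in A G -> finite_set A].

(* the relation  a z_j^2 z_l^2 + b_jl z_j^2 - 2 z_j z_l + b_lj z_l^2 + e = 0,
   written in homogeneous coordinates z_j = X_j/Y_j (so that it makes sense
   at infinity) *)
Definition biquad_rel (m : nat) (a b e : 'I_m -> 'I_m -> R) (j l : 'I_m)
    (P : pt m) : Prop :=
  let Xj := hX (P j) in let Yj := hY (P j) in
  let Xl := hX (P l) in let Yl := hY (P l) in
  a j l * Xj ^+ 2 * Xl ^+ 2 + b j l * Xj ^+ 2 * Yl ^+ 2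
  - 2 * Xj * Yj * Xl * Yl + b l j * Yj ^+ 2 * Xl ^+ 2
  + e j l * Yj ^+ 2 * Yl ^+ 2 = 0.

Definition real_EPBQ_curve (m : nat) (G : ptset m)
    (a b e : 'I_m -> 'I_m -> R) : Prop :=
  [/\ irreducible_real_curve G,
      (forall j l : 'I_m, j != l -> forall P, G P -> biquad_rel a b e j l P),
      (forall j : 'I_m, (exists P, G P /\ P j != Some 0) /\
                        (exists P, G P /\ P j != None)) &
      (* (iii) z_j, z_l neither directly (z_j = c z_l) nor inversely
         (z_j z_l = c) proportional, c a nonzero real constant *)
      (forall j l : 'I_m, j != l ->
         ~ (exists c : R, c != 0 /\ forall P, G P ->
              hX (P j) * hY (P l) = c * hY (P j) * hX (P l)) /\
         ~ (exists c : R, c != 0 /\ forall P, G P ->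
              hX (P j) * hX (P l) = c * hY (P j) * hY (P l)))].

Definition quad_form (n : nat) (G : 'M[R]_n) (x : 'cV[R]_n) : R :=
  (x^T *m G *m x) 0 0.

Definition pos_def (n : nat) (G : 'M[R]_n) : Prop :=
  forall x : 'cV[R]_n, x != 0 -> 0 < quad_form G x.

Definition pos_semidef (n : nat) (G : 'M[R]_n) : Prop :=
  forall x : 'cV[R]_n, 0 <= quad_form G x.

Definition principal_minor (n : nat) (G : 'M[R]_n) (S : {set 'I_n}) : R :=
  \det (\matrix_(i < #|S|, k < #|S|) G (enum_val i) (enum_val k)).

Definition minors_2_to_nm1_pos (n : nat) (G : 'M[R]_n) : Prop :=
  forall S : {set 'I_n}, (2 <= #|S| <= n.-1)%N -> 0 < principal_minor G S.

Definition neg_def_on (n k : nat) (G : 'M[R]_n) (U : 'M[R]_(k, n)) : Prop :=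
  forall x : 'rV[R]_k, x != 0 -> quad_form G (x *m U)^T < 0.

Definition neg_index (n : nat) (G : 'M[R]_n) (k : nat) : Prop :=
  (exists U : 'M[R]_(k, n), \rank U = k /\ neg_def_on G U) /\
  (forall U : 'M[R]_(k.+1, n), ~ neg_def_on G U).

Definition Gmat (m n : nat) (a b e : 'I_m -> 'I_m -> R) (J : 'I_n -> 'I_m)
    (lam : 'I_n -> R) (g : 'I_n -> 'I_n -> R) : 'M[R]_n :=
  \matrix_(p, q)
    if p == q then 1
    else if J p == J q then g p q
    else 2^-1 * (- a (J p) (J q) / (lam p * lam q)
                 + lam q * b (J p) (J q) / lam p
                 + lam p * b (J q) (J p) / lam q
                 - lam p * lam q * e (J p) (J q)).

Definition Hmat (m n : nat) (a b e : 'I_m -> 'I_m -> R) (J : 'I_n -> 'I_m)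
    (lam : 'I_n -> R) (g : 'I_n -> 'I_n -> R) : 'M[R]_n :=
  \matrix_(p, q)
    if p == q then 1
    else if J p == J q then
      2 * lam p * (lam p * g p q - lam q) / (lam p ^+ 2 - lam q ^+ 2)
    else lam p * b (J q) (J p) / lam q - lam p * lam q * e (J p) (J q).

(* The decomposition
   [n] = I_1 u ... u I_m into nonempty sets is encoded by the surjection
   J : [n] -> [m], p |-> j(p); the values g p q matter only when p != q and
   J p = J q. *)
Definition realisable (m : nat) (a b e : 'I_m -> 'I_m -> R) : Prop :=
  exists (n : nat) (J : 'I_n -> 'I_m) (lam : 'I_n -> R) (g : 'I_n -> 'I_n -> R),
    [/\ (3 <= n)%N /\ (forall j : 'I_m, exists p : 'I_n, J p = j),
        (forall p, lam p != 0),
        (forall p q, p != q -> J p = J q -> lam p != lam q /\ lam p != - lam q),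
        (forall p q, p != q -> J p = J q -> g p q = g q p) &
    let G := Gmat a b e J lam g in
    let H := Hmat a b e J lam g in
    [\/ pos_def G,
        [/\ \det G = 0, pos_semidef G, minors_2_to_nm1_pos G &
                      forall p, ~~ (row p H <= G)%MS]
      | [/\ \det G != 0, neg_index G 1, minors_2_to_nm1_pos G &
                      forall p, \sum_q \sum_r invmx G q r * H p q * H p r < 0]]].

End EPBQ.

From HB Require Import structures.
From mathcomp Require Import all_boot all_order all_algebra.
From mathcomp Require Import reals.
From mathcomp Require Import mpoly.
From mathcomp Require Import ring lra.
From mathcomp Require boolp.

(* Solving relation (i) for z_l, its discriminant is the quartic
   alpha z_j^4 + beta z_j^2 + gamma with alpha = -a b, beta = 1 - a e - b b',
   gamma = -b' e, and the quantity to bound is the discriminant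
   beta^2 - 4 alpha gamma of that quartic in z_j^2.  Realisability makes the
   Gram entry between I_j and I_l smaller than 1 in absolute value, which for a
   nonpositive discriminant forces alpha < 0, or alpha = beta = 0 > gamma.  Then
   the quartic is nonpositive, so on the real curve z_l is a double root: by
   irreducibility either z_j is constant up to sign and z_l proportional to it,
   or z_j z_l vanishes identically, contradicting (ii) and (iii).  The symmetry
   a_jl = a_lj, e_jl = e_lj needed to identify the Gram entry comes from (i)
   for (j, l) and (l, j) by the same irreducibility argument. *)

Set Implicit Arguments.
Unset Strict Implicit.
Unset Printing Implicit Defensive.

Import Order.TTheory GRing.Theory Num.Theory.
Local Open Scope ring_scope.

Section BiquadraticRelation.
Variable R : realFieldType.

Definition biquad (a b b' e Xj Yj Xl Yl : R) : R :=
  a * Xj ^+ 2 * Xl ^+ 2 + b * Xj ^+ 2 * Yl ^+ 2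
  - 2 * Xj * Yj * Xl * Yl + b' * Yj ^+ 2 * Xl ^+ 2
  + e * Yj ^+ 2 * Yl ^+ 2.

Lemma biquad_complete_square (a b b' e Xj Yj Xl Yl : R) :
  ((a * Xj ^+ 2 + b' * Yj ^+ 2) * Xl - Xj * Yj * Yl) ^+ 2
  - (- (a * b) * Xj ^+ 4 + (1 - a * e - b * b') * Xj ^+ 2 * Yj ^+ 2
     - b' * e * Yj ^+ 4) * Yl ^+ 2
  = (a * Xj ^+ 2 + b' * Yj ^+ 2) * biquad a b b' e Xj Yj Xl Yl.
Proof. rewrite /biquad; ring. Qed.

Lemma biquad_double_root (a b b' e Xj Yj Xl Yl : R) :
  biquad a b b' e Xj Yj Xl Yl = 0 -> 0 < a * b ->
  (1 - a * e - b * b') ^+ 2 - 4 * a * b * b' * e <= 0 ->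
  (a * Xj ^+ 2 + b' * Yj ^+ 2) * Xl = Xj * Yj * Yl /\
  (- 2 * (a * b) * Xj ^+ 2 + (1 - a * e - b * b') * Yj ^+ 2) * Yl = 0.
Proof.
move=> hF hab hD; have := biquad_complete_square a b b' e Xj Yj Xl Yl.
rewrite hF mulr0 => /eqP; rewrite subr_eq0 => /eqP.
set T := _ * Xl - _; set Q := _ - b' * e * Yj ^+ 4.
set S := - 2 * (a * b) * Xj ^+ 2 + (1 - a * e - b * b') * Yj ^+ 2 => hT.
set D := _ - 4 * a * b * b' * e in hD.
(* Q is, up to the factor [-4ab], the sum of the squares [S^2] and [-D Yj^4]. *)
have hQ : - 4 * (a * b) * Q = S ^+ 2 - D * (Yj ^+ 2) ^+ 2.
  by rewrite /Q /S /D; ring.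
have DY : 0 <= - D * (Yj ^+ 2) ^+ 2 by rewrite mulr_ge0 ?sqr_ge0 ?oppr_ge0.
have Q_le0 : Q <= 0 by have := sqr_ge0 S; nra.
have T0 : T ^+ 2 = 0.
  by apply/eqP; rewrite eq_le sqr_ge0 andbT hT; nra.
split; first by apply/eqP; rewrite -subr_eq0 -sqrf_eq0 T0.
apply/eqP; rewrite -sqrf_eq0 eq_le sqr_ge0 andbT.
have := sqr_ge0 Yl.
have : - 4 * (a * b) * Q * Yl ^+ 2 = 0 by rewrite -mulrA -hT T0 mulr0.
rewrite hQ; nra.
Qed.

Lemma biquad_degenerate (a b b' e Xj Yj Xl Yl : R) :
  biquad a b b' e Xj Yj Xl Yl = 0 -> a * b = 0 -> 1 - a * e - b * b' = 0 ->
  0 < b' * e -> Yj * Yl = 0.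
Proof.
move=> hF hab hbeta hbe; have := biquad_complete_square a b b' e Xj Yj Xl Yl.
rewrite hF mulr0 hab hbeta oppr0 !mul0r !add0r.
set T := _ * Xl - _ => hT.
have : (Yj ^+ 2 * Yl) ^+ 2 = 0.
  apply/eqP; rewrite eq_le sqr_ge0 andbT.
  have := sqr_ge0 T; have -> : (Yj ^+ 2 * Yl) ^+ 2 = Yj ^+ 4 * Yl ^+ 2 by ring.
  nra.
by move/eqP; rewrite sqrf_eq0 mulf_eq0 expf_eq0 /= => /orP[] /eqP ->;
  rewrite ?mul0r ?mulr0.
Qed.

Lemma biquad_disc_nonpos_cases (a b b' e s t : R) : 0 < s -> 0 < t ->
  (- a + t * b + s * b' - s * t * e) ^+ 2 < 4 * s * t ->
  (1 - a * e - b * b') ^+ 2 - 4 * a * b * b' * e <= 0 ->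
  0 < a * b \/ [/\ a * b = 0, 1 - a * e - b * b' = 0 & 0 < b' * e].
Proof.
move=> s0 t0 hst hD.
set A := s * b' - a; set B := b - s * e.
(* AM-GM on [A + B t] yields [A B < s]. *)
have AB_lt : A * B < s.
  have : (A - B * t) ^+ 2 = (A + B * t) ^+ 2 - 4 * (A * B) * t by ring.
  have eL : - a + t * b + s * b' - s * t * e = A + B * t by rewrite /A /B; ring.
  rewrite eL in hst.
  have := sqr_ge0 (A - B * t); nra.
set beta := 1 - a * e - b * b' in hD *.
set D := _ - 4 * a * b * b' * e in hD.
have hP : 4 * (a * b) * (s - A * B) = (beta * s + 2 * (a * b)) ^+ 2 - D * s ^+ 2.
  by rewrite /A /B /D /beta; ring.
have [ab_lt0|ab_gt0|ab0] := ltgtP (a * b) 0.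
- exfalso; have := sqr_ge0 (beta * s + 2 * (a * b)); have := sqr_ge0 s; nra.
- by left.
right; have beta0 : beta = 0.
  apply/eqP; rewrite -sqrf_eq0 eq_le sqr_ge0 andbT.
  by move: hD; rewrite /D -!mulrA (mulrA a) ab0 !(mul0r, mulr0) subr0.
split=> //; have : 0 < s ^+ 2 by rewrite exprn_gt0.
move: AB_lt; rewrite /A /B; move: beta0 ab0; rewrite /beta; nra.
Qed.

End BiquadraticRelation.

Section GramMatrix.
Variable R : realType.

Lemma det_mx22 (A : 'M[R]_2) : \det A = A 0 0 * A 1 1 - A 0 1 * A 1 0.
Proof.
rewrite (expand_det_row _ 0) !big_ord_recr big_ord0 /= /cofactor !det_mx11 !mxE /=.
rewrite add0r expr0 expr1 !mul1r mulN1r.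
have -> : widen_ord (leqnSn 1) ord_max = 0 :> 'I_2 by apply/val_inj.
have -> : lift (0 : 'I_2) (0 : 'I_1) = 1 :> 'I_2 by apply/val_inj.
have -> : ord_max = 1 :> 'I_2 by apply/val_inj.
have -> : lift (1 : 'I_2) (0 : 'I_1) = 0 :> 'I_2 by apply/val_inj.
by rewrite mulrN.
Qed.

Lemma principal_minor_pair_gt0 n (G : 'M[R]_n) (p q : 'I_n) :
  (3 <= n)%N -> p != q -> minors_2_to_nm1_pos G ->
  0 < G p p * G q q - G p q * G q p.
Proof.
move=> n3 pq hG.
have /hG : (2 <= #|[set p; q]| <= n.-1)%N.
  by rewrite cards2 pq; case: (n) n3 => [|[|[|k]]].
rewrite /principal_minor.
have pair_det k (f : 'I_k -> 'I_n) : k = 2%N -> injective f ->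
    (forall i, f i \in [set p; q]) ->
    \det (\matrix_(i, i') G (f i) (f i')) = G p p * G q q - G p q * G q p.
  move=> k2; subst k => f_inj f_in; rewrite det_mx22 !mxE.
  have f01 : f 0 != f 1 by apply/eqP => /f_inj.
  move: (f_in 0) (f_in 1) f01; rewrite !inE.
  by case/orP=> /eqP-> /orP[]/eqP->; rewrite ?eqxx // => _;
    rewrite mulrC (mulrC (G q p)).
by rewrite pair_det ?cards2 ?pq //; [exact: enum_val_inj | exact: enum_valP].
Qed.

Lemma quad_form_pair n (G : 'M[R]_n) (p q : 'I_n) (c : R) : p != q ->
  quad_form G (\col_i (if i == p then 1 else if i == q then c else 0)) =
  G p p + c * (G p q + G q p) + c ^+ 2 * G q q.
Proof.
move=> pq.
have sum_pair (F : 'I_n -> R) :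
    \sum_i (if i == p then 1 else if i == q then c else 0) * F i = F p + c * F q.
  rewrite (bigD1 p) //= eqxx (bigD1 q) 1?eq_sym //= (negbTE pq) eqxx.
  rewrite big1 ?addr0 ?mul1r // => i /andP[/negbTE -> /negbTE ->].
  by rewrite mul0r.
rewrite /quad_form !mxE.
under eq_bigr => k _ do rewrite !mxE mulrC.
under eq_bigr => k _ do under eq_bigr => i _ do rewrite !mxE.
by rewrite sum_pair !sum_pair; ring.
Qed.

Lemma pos_def_unit_diag_pair n (G : 'M[R]_n) (p q : 'I_n) : pos_def G ->
  p != q -> G p p = 1 -> G q q = 1 -> G q p = G p q -> 0 < 1 - G p q ^+ 2.
Proof.
move=> hG pq Gp Gq Gqp.
set v := \col_i (if i == p then 1 else if i == q then - G p q else 0).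
have v0 : v != 0.
  by apply/eqP => /(congr1 (fun M : 'cV_n => M p 0)); rewrite !mxE eqxx; exact/eqP/oner_neq0.
by have := hG v v0; rewrite quad_form_pair // Gp Gq Gqp; congr (0 < _); ring.
Qed.

Lemma realisable_pair_bound m (a b e : 'I_m -> 'I_m -> R) (j l : 'I_m) :
  j != l -> a j l = a l j -> e j l = e l j -> realisable a b e ->
  exists s t : R, [/\ 0 < s, 0 < t &
    (- a j l + t * b j l + s * b l j - s * t * e j l) ^+ 2 < 4 * s * t].
Proof.
move=> jl ea ee [n [J [lam [g [[n3 surjJ] lam0 _ _ hGH]]]]].
have [p Jp] := surjJ j; have [q Jq] := surjJ l.
have pq : p != q by apply: contraNneq jl => epq; rewrite -Jp -Jq epq.
set G := Gmat a b e J lam g in hGH.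
have Gdiag r : G r r = 1 by rewrite mxE eqxx.
have Gqp : G q p = G p q.
  rewrite !mxE eq_sym (negbTE pq) Jp Jq eq_sym (negbTE jl) -ea -ee.
  by rewrite (mulrC (lam q)); congr (_ * _); ring.
have Gpq_lt1 : 0 < 1 - G p q ^+ 2.
  case: hGH => [hS | [_ _ hm _] | [_ _ hm _]].
  - exact: pos_def_unit_diag_pair.
  - by have := principal_minor_pair_gt0 n3 pq hm; rewrite !Gdiag Gqp mul1r expr2.
  - by have := principal_minor_pair_gt0 n3 pq hm; rewrite !Gdiag Gqp mul1r expr2.
have Gpq : - a j l + lam q ^+ 2 * b j l + lam p ^+ 2 * b l j
    - lam p ^+ 2 * lam q ^+ 2 * e j l = 2 * lam p * lam q * G p q.
  by rewrite mxE (negbTE pq) Jp Jq (negbTE jl); field; rewrite !lam0.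
exists (lam p ^+ 2), (lam q ^+ 2); rewrite !exprn_even_gt0 ?lam0 //; split=> //.
have : 0 < lam p ^+ 2 * lam q ^+ 2 by rewrite mulr_gt0 ?exprn_even_gt0 ?lam0.
rewrite Gpq; nra.
Qed.

End GramMatrix.

Section ZeroLoci.
Variables (R : realType) (m : nat).

Definition XY_mpoly (j l : 'I_m) (c1 c2 : R) : {mpoly R[m + m]} :=
  c1 *: 'X_[U_(lshift m j) + U_(lshift m l)]
  + c2 *: 'X_[U_(rshift m j) + U_(rshift m l)].

Lemma XY_mpoly_multihomogeneous j l c1 c2 : multihomogeneous (XY_mpoly j l c1 c2).
Proof.
exists (fun k => ((j == k) + (l == k))%N) => mo /msuppD_le.
rewrite mem_cat => /orP[] /msuppZ_le /mem_msuppXP <- k;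
  by rewrite !mnmDE !mnm1E ?eq_lshift ?eq_rshift ?eq_lrshift ?eq_rlshift /= ?addn0.
Qed.

Lemma meval_XY_mpoly j l c1 c2 (P : pt R m) :
  (XY_mpoly j l c1 c2).@[coords P] =
  c1 * (hX (P j) * hX (P l)) + c2 * (hY (P j) * hY (P l)).
Proof.
have cX k : coords P (lshift m k) = hX (P k) by rewrite /coords (unsplitK (inl k)).
have cY k : coords P (rshift m k) = hY (P k) by rewrite /coords (unsplitK (inr k)).
by rewrite mevalD !mevalZ !mpolyXD !mevalM !mevalXU !cX !cY.
Qed.

Lemma irreducible_alg_vanish (G : ptset R m) (f1 f2 : {mpoly R[m + m]}) :
  irreducible_alg G -> multihomogeneous f1 -> multihomogeneous f2 ->
  (forall P, G P -> f1.@[coords P] = 0 \/ f2.@[coords P] = 0) ->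
  (forall P, G P -> f1.@[coords P] = 0) \/ (forall P, G P -> f2.@[coords P] = 0).
Proof.
case=> [[ps [hps hG]] _ hirr] h1 h2 hU.
pose Z f P := G P /\ f.@[coords P] = 0.
have Z_alg f : multihomogeneous f -> algebraic (Z f).
  move=> hf; exists (f :: ps); split=> [p|P].
    by rewrite inE => /orP[/eqP->|/hps].
  split=> [[/hG hP hf0] p|hP].
    by rewrite inE => /orP[/eqP->//|]; exact: hP.
  split; last by apply: hP; rewrite inE eqxx.
  by apply/hG => p hp; apply: hP; rewrite inE hp orbT.
have Z_proper f : ~ (forall P, G P -> f.@[coords P] = 0) -> proper_in (Z f) G.
  move=> nf; split=> [P []//|].
  have [P /boolp.not_implyP[GP nP]] := (boolp.existsNP _).2 nf.
  by exists P; split=> // -[].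
have [c1|n1] := boolp.pselect (forall P, G P -> f1.@[coords P] = 0); first by left.
have [c2|n2] := boolp.pselect (forall P, G P -> f2.@[coords P] = 0); first by right.
exfalso; apply: hirr; exists (Z f1), (Z f2).
split; [exact: Z_alg | exact: Z_alg | exact: Z_proper | exact: Z_proper |].
by move=> P GP; case: (hU P GP); [left|right].
Qed.

End ZeroLoci.

Section EPBQCurve.
Variables (R : realType) (m : nat) (G : ptset R m) (a b e : 'I_m -> 'I_m -> R).
Hypothesis hG : real_EPBQ_curve G a b e.

Lemma EPBQ_biquad j l P : j != l -> G P ->
  biquad (a j l) (b j l) (b l j) (e j l) (hX (P j)) (hY (P j)) (hX (P l)) (hY (P l)) = 0.
Proof. by case: hG => _ rel _ _ jl GP; exact: rel. Qed.

Lemma EPBQ_hX_not_vanishing j : ~ (forall P, G P -> hX (P j) = 0).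
Proof.
case: hG => _ _ /(_ j) [[P [GP nP]] _] _ /(_ P GP).
by case: (P j) nP => [x|] /= nx x0; [rewrite x0 eqxx in nx | lra].
Qed.

Lemma EPBQ_hY_not_vanishing j : ~ (forall P, G P -> hY (P j) = 0).
Proof.
case: hG => _ _ /(_ j) [_ [P [GP nP]]] _ /(_ P GP).
by case: (P j) nP => //= x _; lra.
Qed.

Lemma EPBQ_hX_mul_not_vanishing j l : ~ (forall P, G P -> hX (P j) * hX (P l) = 0).
Proof.
case: hG => -[irr _ _] _ _ _ H.
have hjl P : G P -> (XY_mpoly j j 1 0).@[coords P] = 0 \/ (XY_mpoly l l 1 0).@[coords P] = 0.
  move=> GP; rewrite !meval_XY_mpoly !mul0r !addr0 !mul1r.
  by have /eqP := H P GP; rewrite mulf_eq0 => /orP[] /eqP ->; [left|right]; rewrite mul0r.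
have [Hk|Hk] := irreducible_alg_vanish irr (XY_mpoly_multihomogeneous j j 1 0)
  (XY_mpoly_multihomogeneous l l 1 0) hjl;
  [apply: (@EPBQ_hX_not_vanishing j) | apply: (@EPBQ_hX_not_vanishing l)];
  by move=> P /Hk/eqP; rewrite meval_XY_mpoly mul0r addr0 mul1r mulf_eq0 orbb => /eqP.
Qed.

Lemma EPBQ_hY_mul_not_vanishing j l : ~ (forall P, G P -> hY (P j) * hY (P l) = 0).
Proof.
case: hG => -[irr _ _] _ _ _ H.
have hjl P : G P -> (XY_mpoly j j 0 1).@[coords P] = 0 \/ (XY_mpoly l l 0 1).@[coords P] = 0.
  move=> GP; rewrite !meval_XY_mpoly !mul0r !add0r !mul1r.
  by have /eqP := H P GP; rewrite mulf_eq0 => /orP[] /eqP ->; [left|right]; rewrite mul0r.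
have [Hk|Hk] := irreducible_alg_vanish irr (XY_mpoly_multihomogeneous j j 0 1)
  (XY_mpoly_multihomogeneous l l 0 1) hjl;
  [apply: (@EPBQ_hY_not_vanishing j) | apply: (@EPBQ_hY_not_vanishing l)];
  by move=> P /Hk/eqP; rewrite meval_XY_mpoly mul0r add0r mul1r mulf_eq0 orbb => /eqP.
Qed.

Lemma EPBQ_no_sq_inverse_prop j l (c : R) : j != l -> 0 < c ->
  ~ (forall P, G P -> (hX (P j) * hX (P l)) ^+ 2 = c * (hY (P j) * hY (P l)) ^+ 2).
Proof.
move=> jl c_gt0 H; case: hG => -[irr _ _] _ _ /(_ j l jl) [_ inv_prop].
pose r := Num.sqrt c.
have r0 : r != 0 by rewrite sqrtr_eq0 -ltNge.
have hjl P : G P -> (XY_mpoly j l 1 (- r)).@[coords P] = 0 \/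
                    (XY_mpoly j l 1 r).@[coords P] = 0.
  move=> GP; rewrite !meval_XY_mpoly !mul1r mulNr.
  have /eqP : (hX (P j) * hX (P l)) ^+ 2 - (r * (hY (P j) * hY (P l))) ^+ 2 = 0.
    by rewrite H // [(r * _) ^+ 2]exprMn sqr_sqrtr ?ltW // subrr.
  by rewrite subr_sqr mulf_eq0 => /orP[] /eqP; [left|right].
have [Hk|Hk] := irreducible_alg_vanish irr (XY_mpoly_multihomogeneous j l 1 (- r))
  (XY_mpoly_multihomogeneous j l 1 r) hjl; apply: inv_prop.
- by exists r; split=> // P /Hk; rewrite meval_XY_mpoly; lra.
- exists (- r); rewrite oppr_eq0; split=> // P /Hk; rewrite meval_XY_mpoly; lra.
Qed.

Lemma EPBQ_sq_relation_trivial j l (c1 c2 : R) : j != l ->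
  (forall P, G P ->
     c1 * (hX (P j) * hX (P l)) ^+ 2 + c2 * (hY (P j) * hY (P l)) ^+ 2 = 0) ->
  c1 = 0 /\ c2 = 0.
Proof.
move=> jl H.
have [c10|c1n0] := eqVneq c1 0; have [c20|c2n0] := eqVneq c2 0 => //; exfalso.
- apply: (@EPBQ_hY_mul_not_vanishing j l) => P /H.
  by rewrite c10 mul0r add0r => /eqP; rewrite mulf_eq0 (negbTE c2n0) sqrf_eq0 => /eqP.
- apply: (@EPBQ_hX_mul_not_vanishing j l) => P /H.
  by rewrite c20 mul0r addr0 => /eqP; rewrite mulf_eq0 (negbTE c1n0) sqrf_eq0 => /eqP.
set c := - c2 / c1.
have Hc P : G P -> (hX (P j) * hX (P l)) ^+ 2 = c * (hY (P j) * hY (P l)) ^+ 2.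
  move=> /H; set X := _ ^+ 2; set Y := _ ^+ 2.
  have -> : c1 * X + c2 * Y = c1 * (X - c * Y) by rewrite /c; field.
  by move/eqP; rewrite mulf_eq0 (negbTE c1n0) subr_eq0 => /eqP.
have [c_gt0|c_le0] := ltrP 0 c; first exact: EPBQ_no_sq_inverse_prop jl c_gt0 Hc.
apply: (@EPBQ_hX_mul_not_vanishing j l) => P /Hc h.
by apply/eqP; rewrite -sqrf_eq0 eq_le sqr_ge0 andbT h mulr_le0_ge0 ?sqr_ge0.
Qed.

Lemma EPBQ_coef_sym j l : j != l -> a j l = a l j /\ e j l = e l j.
Proof.
move=> jl; have lj : l != j by rewrite eq_sym.
have [/eqP da /eqP de] : a j l - a l j = 0 /\ e j l - e l j = 0.
  apply: (EPBQ_sq_relation_trivial jl) => P GP.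
  have := EPBQ_biquad jl GP; have := EPBQ_biquad lj GP; rewrite /biquad; lra.
by move: da de; rewrite !subr_eq0 => /eqP -> /eqP ->.
Qed.

Lemma EPBQ_no_const_line j l (k M : R) : j != l ->
  ~ (forall P, G P ->
       exists u, [/\ P j = Some u, u ^+ 2 = k & M * hX (P l) = u * hY (P l)]).
Proof.
move=> jl H; case: hG => _ _ /(_ j) [[P0 [GP0 nP0]] _] /(_ j l jl) [dir_prop _].
have k0 : k != 0.
  have [u [Pu <- _]] := H P0 GP0.
  by rewrite sqrf_eq0; apply: contraNneq nP0 => u0; rewrite Pu u0.
have [M0|Mn0] := eqVneq M 0.
  apply: (@EPBQ_hY_not_vanishing l) => P /H [u [_ uk]].
  rewrite M0 mul0r => /eqP; rewrite eq_sym mulf_eq0 => /orP[/eqP u0|/eqP //].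
  by move: k0; rewrite -uk u0 expr0n eqxx.
apply: dir_prop; exists M; split=> // P /H [u [-> _ hu]] /=; lra.
Qed.

Lemma EPBQ_disc_gt0_of_ab_gt0 j l : j != l -> 0 < a j l * b j l ->
  0 < (1 - a j l * e j l - b j l * b l j) ^+ 2 - 4 * a j l * b j l * b l j * e j l.
Proof.
move=> jl ab_gt0; rewrite ltNge; apply/negP => hD.
case: hG => -[irr _ _] _ _ _.
set beta := 1 - _ - _ in hD.
have root P (GP : G P) := biquad_double_root (EPBQ_biquad jl GP) ab_gt0 hD.
have hjl P : G P -> (XY_mpoly j j (- 2 * (a j l * b j l)) beta).@[coords P] = 0 \/
                    (XY_mpoly l l 0 1).@[coords P] = 0.
  move=> /root [_ /eqP]; rewrite !meval_XY_mpoly mul0r add0r mul1r -!expr2.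
  by rewrite mulf_eq0 => /orP[/eqP h|/eqP ->]; [left | right; rewrite expr2 mul0r].
have [Hj|Hl] := irreducible_alg_vanish irr (XY_mpoly_multihomogeneous _ _ _ _)
  (XY_mpoly_multihomogeneous _ _ _ _) hjl; last first.
  apply: (@EPBQ_hY_not_vanishing l) => P /Hl/eqP.
  by rewrite meval_XY_mpoly mul0r add0r mul1r mulf_eq0 orbb => /eqP.
set k := beta / (2 * (a j l * b j l)).
apply: (@EPBQ_no_const_line j l k (a j l * k + b l j) jl) => P GP.
have := Hj P GP; rewrite meval_XY_mpoly -!expr2.
have [/= Tl _] := root P GP; case: (P j) Tl => [u|] /=; last by lra.
rewrite !expr1n !mulr1 => Tl hu.
have uk : u ^+ 2 = k.
  have ab2 : 2 * (a j l * b j l) != 0 by rewrite mulf_neq0 // gt_eqF.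
  by rewrite /k -[u ^+ 2](mulfK ab2); congr (_ / _); lra.
by exists u; split=> //; rewrite -uk Tl.
Qed.

Lemma EPBQ_not_degenerate j l : j != l -> a j l * b j l = 0 ->
  1 - a j l * e j l - b j l * b l j = 0 -> b l j * e j l <= 0.
Proof.
move=> jl ab0 beta0; rewrite leNgt; apply/negP => be_gt0.
apply: (@EPBQ_hY_mul_not_vanishing j l) => P GP.
exact: biquad_degenerate (EPBQ_biquad jl GP) ab0 beta0 be_gt0.
Qed.

End EPBQCurve.

Theorem mainTheorem8 (R : realType) (m : nat) (Gamma : ptset R m)
    (a b e : 'I_m -> 'I_m -> R) :
  real_EPBQ_curve Gamma a b e ->
  realisable a b e ->
  forall j l : 'I_m, j != l ->
    0 < (1 - a j l * e j l - b j l * b l j) ^+ 2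
        - 4 * a j l * b j l * b l j * e j l.
Proof.
move=> hG hR j l jl.
have [ea ee] := EPBQ_coef_sym hG jl.
have [s [t [s_gt0 t_gt0 hst]]] := realisable_pair_bound jl ea ee hR.
rewrite ltNge; apply/negP => hD.
have [ab_gt0 | [ab0 beta0 be_gt0]] := biquad_disc_nonpos_cases s_gt0 t_gt0 hst hD.
- by move: hD; rewrite leNgt (EPBQ_disc_gt0_of_ab_gt0 hG jl ab_gt0).
- by move: be_gt0; rewrite ltNge (EPBQ_not_degenerate hG jl ab0 beta0).
Qed.
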